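(* Let $P(q)=\sum_{j=0}^{n} q^{j}a_{j}$ be a slice regular polynomial of degree $n$ with all coefficients $a_j\in\mathbb H$. Assume that for some $I\in\mathbb S$, the restriction $P_I$ of $P$ to $\mathbb C_I$ has no zero in the open unit disk $\mathbb B_I=\{q\in\mathbb C_I:|q|<1\}$, and $P_I(\mathbb C_I)\subset\mathbb C_I$. Then $$\|P'\|\leq\frac{n}{2}\|P\|,$$ where $P'(q)=\sum_{j=1}^n q^{j-1}ja_j$ and $\|F\|=\max_{|q|\le1}|F(q)|$.
   Context: $\mathbb H$ denotes the quaternions with modulus $|q|=\sqrt{q\bar q}$; $\mathbb S=\{q\in\mathbb H:q^2=-1\}$; for $I\in\mathbb S$, $\mathbb C_I=\mathbb R\oplus I\mathbb R$ (a copy of $\mathbb C$). A slice regular polynomial of degree $n$ is a function $q\mapsto\sum_{j=0}^n q^ja_j$ with coefficients on the right and $a_n\neq0$. *)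

From HB Require Import structures.
From mathcomp Require Import all_boot all_order all_algebra.
From mathcomp Require Import classical_sets reals.
Set Implicit Arguments. Unset Strict Implicit. Unset Printing Implicit Defensive.
Import Order.TTheory GRing.Theory Num.Theory.
Local Open Scope ring_scope.
Local Open Scope classical_set_scope.

Record quat (R : realType) := Quat { qre : R; qi : R; qj : R; qk : R }.

Section Quat.
Variable R : realType.
Implicit Types p q : quat R.

Definition qreal (r : R) : quat R := Quat r 0 0 0.
Definition qzero : quat R := qreal 0.
Definition qone : quat R := qreal 1.
Definition qadd p q : quat R :=
  Quat (qre p + qre q) (qi p + qi q) (qj p + qj q) (qk p + qk q).
Definition qmul p q : quat R :=
  Quat (qre p * qre q - qi p * qi q - qj p * qj q - qk p * qk q)
       (qre p * qi q + qi p * qre q + qj p * qk q - qk p * qj q)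
       (qre p * qj q - qi p * qk q + qj p * qre q + qk p * qi q)
       (qre p * qk q + qi p * qj q - qj p * qi q + qk p * qre q).
Definition qnorm q : R :=
  Num.sqrt (qre q ^+ 2 + qi q ^+ 2 + qj q ^+ 2 + qk q ^+ 2).
Fixpoint qpow q (n : nat) : quat R :=
  match n with 0 => qone | m.+1 => qmul (qpow q m) q end.
Definition qsum (n : nat) (F : nat -> quat R) : quat R :=
  foldr (fun j acc => qadd (F j) acc) qzero (iota 0 n).

Definition in_sphereS (I : quat R) : Prop := qmul I I = qreal (-1).
Definition sliceC (I : quat R) (x y : R) : quat R := qadd (qreal x) (qmul I (qreal y)).

Definition spoly (n : nat) (a : nat -> quat R) (q : quat R) : quat R :=
  qsum n.+1 (fun j => qmul (qpow q j) (a j)).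
Definition spoly_deriv (n : nat) (a : nat -> quat R) (q : quat R) : quat R :=
  qsum n (fun j => qmul (qpow q j) (qmul (qreal (j.+1)%:R) (a j.+1))).

(* ||F|| = max_{|q| <= 1} |F(q)| (written as a supremum; the max is attained) *)
Definition qsupnorm (F : quat R -> quat R) : R :=
  sup [set qnorm (F q) | q in [set q | qnorm q <= 1]].
End Quat.

(* The coefficients of P lie in C_I, because P maps the real axis into C_I.  By the
   representation formula, |P(q)| is then dominated by the modulus of the complex polynomial
   p = P_I at one of the two points of C_I with the real part and modulus of q, so that
   ||P|| = ||p|| and ||P'|| = ||p'||, and the claim is Lax's inequality for p.  For |z| = 1,
   z p'(z) / p(z) is the sum of the z / (z - w) over the roots w of p, which lie outside the
   open disk, and Re (z / (z - w)) <= 1/2; hence |z p'(z)| <= |n p(z) - z p'(z)|.  The strict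
   form of this bound for p - l ||p||, |l| > 1, which has no root in the closed disk, gives
   |p'(z)| + |n p(z) - z p'(z)| <= n ||p|| after optimising over l.  The maximum modulus
   principle, proved with the mean value property over roots of unity, extends the bound
   from the circle to the disk. *)

From mathcomp Require Import all_boot all_order all_algebra.
From mathcomp Require Import boolp classical_sets reals.
From mathcomp.real_closed Require Import complex.
From mathcomp Require cyclic separable cyclotomic.
From mathcomp Require Import ring lra.
Import Order.TTheory GRing.Theory Num.Theory Normc.
Local Open Scope ring_scope.
Local Open Scope complex_scope.
Local Open Scope classical_set_scope.
Set Implicit Arguments. Unset Strict Implicit. Unset Printing Implicit Defensive.

Local Notation Re := complex.Re.

Section ComplexNorm.
Variable R : rcfType.
Implicit Types (a b : R) (z w : R[i]).

Lemma normc_sqr a b : normc (a +i* b) ^+ 2 = a ^+ 2 + b ^+ 2.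
Proof. by rewrite sqr_sqrtr // addr_ge0 ?sqr_ge0. Qed.

Lemma normc_ge0 z : 0 <= normc z.
Proof. by case: z => a b; apply: sqrtr_ge0. Qed.

Lemma normc_eq0 z : (normc z == 0) = (z == 0).
Proof. by apply/eqP/eqP => [/eq0_normc|->]; rewrite ?normc0. Qed.

Lemma normcX z k : normc (z ^+ k) = normc z ^+ k.
Proof. by elim: k => [|k IH]; rewrite ?normc1 // !exprS normcM IH. Qed.

Lemma normc_real a : normc a%:C = `|a|.
Proof. by rewrite /= expr0n addr0 sqrtr_sqr. Qed.

Lemma normc_nat k : normc k%:R = k%:R :> R.
Proof. by rewrite -(rmorph_nat (real_complex R)) normc_real ger0_norm. Qed.

Lemma normc_sum (I : Type) (r : seq I) (F : I -> R[i]) :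
  normc (\sum_(i <- r) F i) <= \sum_(i <- r) normc (F i).
Proof.
elim: r => [|i r IH]; first by rewrite !big_nil normc0.
by rewrite !big_cons (le_trans (le_normcD _ _)) ?lerD.
Qed.

Lemma ReD z w : Re (z + w) = Re z + Re w.
Proof. by case: z; case: w. Qed.

Lemma Re_div_sub z w : z != w ->
  2 * Re (z / (z - w)) - 1 = (normc z ^+ 2 - normc w ^+ 2) / normc (z - w) ^+ 2.
Proof.
case: z => a b; case: w => c d; rewrite -subr_eq0.
have -> : (a +i* b) - (c +i* d) = (a - c) +i* (b - d) by [].
move=> zw; have : normc ((a - c) +i* (b - d)) ^+ 2 != 0.
  by rewrite sqrf_eq0 normc_eq0.
by rewrite !normc_sqr /= => ?; field.
Qed.

Lemma normc_natB_sqr (k : nat) z :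
  normc (k%:R - z) ^+ 2 - normc z ^+ 2 = k%:R * (k%:R - 2 * Re z).
Proof.
case: z => a b; have -> : k%:R - a +i* b = (k%:R - a) +i* (0 - b).
  by rewrite -(rmorph_nat (real_complex R)).
by rewrite !normc_sqr /=; ring.
Qed.

Lemma polar_decomp z : exists2 u, normc u = 1 & z = (normc z)%:C * u.
Proof.
have [->|z0] := eqVneq z 0; first by exists 1; rewrite ?normc1 ?normc0 ?mul0r.
have nz0 : normc z != 0 by rewrite normc_eq0.
have Cz0 : (normc z)%:C != 0 by apply: contra nz0 => /eqP[->].
exists (z / (normc z)%:C); last by rewrite mulrC divfK.
by rewrite normcM normcV normc_real ger0_norm ?normc_ge0 // mulfV.
Qed.

End ComplexNorm.

Section LogDerivative.
Variable F : fieldType.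

Lemma mul_deriv_prod_XsubC (s : seq F) z :
  (\prod_(w <- s) ('X - w%:P)).[z] != 0 ->
  z * (\prod_(w <- s) ('X - w%:P))^`().[z] =
  (\prod_(w <- s) ('X - w%:P)).[z] * \sum_(w <- s) z / (z - w).
Proof.
elim: s => [|w s IH]; first by rewrite !big_nil derivC !hornerE.
rewrite !big_cons derivM derivXsubC !hornerE mulf_eq0 negb_or => /andP[zw ps].
by rewrite mulrDr mulrA [z * (z - w)]mulrC -mulrA IH //; field.
Qed.

End LogDerivative.

Section DerivativeBound.
Variable R : rcfType.
Local Notation C := R[i].
Implicit Types (z w : C) (p : {poly C}).

Lemma Re_sum_div_sub z (s : seq C) : z \notin s ->
  2 * Re (\sum_(w <- s) z / (z - w)) =
  (size s)%:R + \sum_(w <- s) (normc z ^+ 2 - normc w ^+ 2) / normc (z - w) ^+ 2.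
Proof.
elim: s => [|w s IH]; first by rewrite !big_nil /= mulr0 addr0.
rewrite in_cons negb_or => /andP[zw zs].
rewrite !big_cons ReD -Re_div_sub // mulrDr IH //= -add1n natrD; ring.
Qed.

Lemma normc_deriv_gap p z : p.[z] != 0 ->
  exists2 r : seq C, size r = (size p).-1 & (forall w, w \in r -> root p w) /\
  normc ((size r)%:R * p.[z] - z * p^`().[z]) ^+ 2 - normc (z * p^`().[z]) ^+ 2 =
  - ((size r)%:R * normc p.[z] ^+ 2 *
     \sum_(w <- r) (normc z ^+ 2 - normc w ^+ 2) / normc (z - w) ^+ 2).
Proof.
move=> pz; have [r Dp] := closed_field_poly_normal p.
have lc0 : lead_coef p != 0.
  by rewrite lead_coef_eq0; apply: contraNneq pz => ->; rewrite horner0.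
set G := \prod_(w <- r) _ in Dp; pose S := \sum_(w <- r) z / (z - w).
have Gz : G.[z] != 0 by move: pz; rewrite Dp hornerZ mulf_eq0 negb_or => /andP[].
have zr : z \notin r by apply: contra Gz; rewrite -root_prod_XsubC.
have zS : z * p^`().[z] = p.[z] * S.
  by rewrite Dp derivZ !hornerZ mulrCA mul_deriv_prod_XsubC // mulrA.
exists r; first by rewrite Dp size_scale // size_prod_XsubC.
split=> [w wr|]; first by rewrite Dp rootZ // root_prod_XsubC.
rewrite zS; have -> : (size r)%:R * p.[z] - p.[z] * S = p.[z] * ((size r)%:R - S) by ring.
rewrite !normcM !exprMn -mulrBr normc_natB_sqr Re_sum_div_sub //; ring.
Qed.

Lemma normc_mul_deriv_le p z : p.[z] != 0 ->
    (forall w, root p w -> normc z <= normc w) ->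
  normc (z * p^`().[z]) <= normc ((size p).-1%:R * p.[z] - z * p^`().[z]).
Proof.
move=> pz zr; have [r <- [rp gap]] := normc_deriv_gap pz.
rewrite -ler_sqr ?nnegrE ?normc_ge0 // -subr_ge0 gap oppr_ge0.
rewrite mulr_ge0_le0 ?mulr_ge0 ?ler0n ?sqr_ge0 ?normc_ge0 // big_seq sumr_le0 // => w wr.
by rewrite mulr_le0_ge0 ?invr_ge0 ?sqr_ge0 // subr_le0 ler_sqr ?nnegrE ?normc_ge0 ?zr ?rp.
Qed.

Lemma normc_mul_deriv_lt p z : (1 < size p)%N -> p.[z] != 0 ->
    (forall w, root p w -> normc z < normc w) ->
  normc (z * p^`().[z]) < normc ((size p).-1%:R * p.[z] - z * p^`().[z]).
Proof.
move=> p1 pz zr; have [r Er [rp gap]] := normc_deriv_gap pz.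
have r0 : (0 < size r)%N by rewrite Er -ltnS prednK // ltnW.
have sum_lt0 : \sum_(w <- r) (normc z ^+ 2 - normc w ^+ 2) / normc (z - w) ^+ 2 < 0.
  rewrite big_seq (lt_le_trans (ltr_sum (G := fun=> 0) _ _)) ?big1 // => [|w wr].
    by case: r r0 {Er rp gap}=> //= w r _; rewrite mem_head.
  have zw : z != w by apply: contraTneq (rp w wr) => <-; rewrite /root (negPf pz).
  rewrite pmulr_llt0 ?invr_gt0 ?exprn_even_gt0 //= ?normc_eq0 ?subr_eq0 //.
  by rewrite subr_lt0 ltr_sqr ?nnegrE ?normc_ge0 ?zr ?rp.
rewrite -Er -ltr_sqr ?nnegrE ?normc_ge0 // -subr_gt0 gap oppr_gt0.
by rewrite pmulr_rlt0 // mulr_gt0 ?ltr0n ?exprn_even_gt0 //= normc_eq0.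
Qed.

End DerivativeBound.

Lemma prim_root_exists (F : numClosedFieldType) (N : nat) :
  (0 < N)%N -> exists w : F, N.-primitive_root w.
Proof.
pose p : {poly F} := 'X^N - 1; have [r Dp] := closed_field_poly_normal p.
move=> N_gt0; rewrite (monicP _) ?monicXnsubC // scale1r in Dp.
have rN1 : all N.-unity_root r by apply/allP=> z; rewrite -root_prod_XsubC -Dp.
have sz_r : (N < (size r).+1)%N.
  by rewrite -(size_prod_XsubC r id) -Dp size_XnsubC.
have [|z] := hasP (cyclic.has_prim_root N_gt0 rN1 _ sz_r); last by exists z.
rewrite -separable.separable_prod_XsubC -Dp cyclotomic.separable_Xn_sub_1 //.
by rewrite pnatr_eq0 -lt0n.
Qed.

Section RootsOfUnityMean.
Variable F : idomainType.

Lemma sum_prim_root_expr (N i : nat) (w : F) : N.-primitive_root w ->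
  (0 < i < N)%N -> \sum_(k < N) (w ^+ i) ^+ k = 0.
Proof.
move=> pw /andP[i0 iN].
have wi1 : w ^+ i - 1 != 0.
  rewrite subr_eq0 -(prim_order_dvd pw); apply: contraTN iN => /dvdn_leq.
  by rewrite -leqNgt; apply.
have : (w ^+ i - 1) * \sum_(k < N) (w ^+ i) ^+ k = 0.
  by rewrite -subrX1 exprAC (prim_expr_order pw) expr1n subrr.
by move/eqP; rewrite mulf_eq0 (negPf wi1) => /eqP.
Qed.

Lemma mean_value_prim_root (N : nat) (w : F) (f : {poly F}) (z0 h : F) :
  N.-primitive_root w -> (size f <= N)%N ->
  \sum_(k < N) f.[z0 + h * w ^+ k] = N%:R * f.[z0].
Proof.
move=> pw sf; have N0 := prim_order_gt0 pw.
pose g := f \Po ('X + z0%:P).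
have gE x : g.[x] = f.[x + z0] by rewrite horner_comp !hornerE.
have sg : (size g <= N)%N by rewrite size_comp_poly2 ?size_XaddC.
transitivity (\sum_(k < N) g.[h * w ^+ k]).
  by apply: eq_bigr => k _; rewrite gE addrC.
under eq_bigr do rewrite (horner_coef_wide _ sg).
rewrite exchange_big /=.
transitivity (\sum_(i < N) g`_i * h ^+ i * \sum_(k < N) (w ^+ i) ^+ k).
  apply: eq_bigr => i _; rewrite mulr_sumr; apply: eq_bigr => k _.
  by rewrite exprMn -mulrA -exprM mulnC exprM.
rewrite (bigD1 (Ordinal N0)) //= [X in _ + X]big1 ?addr0.
  rewrite expr0 mulr1 -[z0]add0r -gE horner_coef0.
  under eq_bigr do rewrite expr0 expr1n.
  by rewrite sumr_const card_ord mulrC -mulr_natl.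
move=> i /eqP ni; rewrite sum_prim_root_expr ?mulr0 // ltn_ord andbT lt0n.
by apply/eqP => i0; apply: ni; apply: val_inj.
Qed.

End RootsOfUnityMean.

Lemma add_le_of_lt_norm_sub (R : realFieldType) (d a c : R) :
  0 <= d -> 0 < c -> (forall t, 1 < t -> d < `|a - c * t|) -> d + a <= c.
Proof.
move=> d0 c0 H.
have ac : a <= c.
  rewrite leNgt; apply/negP => ca.
  have := H (a / c); rewrite ltr_pdivlMr // mul1r mulrC divfK ?gt_eqF //.
  by rewrite subrr normr0 => /(_ ca); rewrite ltNge d0.
apply/ler_addgt0Pr => e e0; have := H (1 + e / c).
rewrite ltrDl divr_gt0 // mulrDr mulr1 mulrC divfK ?gt_eqF //.
by rewrite ler0_norm; [move=> /(_ isT); lra | lra].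
Qed.

Section SupNorm.
Variable R : realType.
Local Notation C := R[i].
Implicit Types (z u : C) (p : {poly C}).

Definition csupnorm p : R := sup [set normc p.[z] | z in [set z | normc z <= 1]].

Lemma normc_horner_le_sum_coef p z : normc z <= 1 ->
  normc p.[z] <= \sum_(i < size p) normc p`_i.
Proof.
move=> z1; rewrite horner_coef; apply: le_trans (normc_sum _ _) _.
apply: ler_sum => i _; rewrite normcM normcX.
by rewrite ler_piMr ?normc_ge0 // exprn_ile1 ?normc_ge0.
Qed.

Lemma csupnorm_ge p z : normc z <= 1 -> normc p.[z] <= csupnorm p.
Proof.
move=> z1; apply: sup_upper_bound; last by exists z.
split; first by exists (normc p.[z]), z.
exists (\sum_(i < size p) normc p`_i) => _ [w /= w1 <-].
exact: normc_horner_le_sum_coef.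
Qed.

Lemma csupnorm_le p K : (forall z, normc z <= 1 -> normc p.[z] <= K) -> csupnorm p <= K.
Proof.
move=> HK; apply: ge_sup.
  by exists (normc p.[0]), 0; rewrite //= expr0n addr0 sqrtr0 ler01.
by move=> _ [z /= z1 <-]; apply: HK.
Qed.

Lemma normc_horner_mean_le p z0 : normc z0 <= 1 -> exists2 u, normc u = 1 &
  (size p).+1%:R * normc p.[z0] <= normc p.[u] + (size p)%:R * csupnorm p.
Proof.
move=> z01; have [w pw] := prim_root_exists C (ltn0Sn (size p)).
have nw : normc w = 1.
  apply/eqP; rewrite -(pexpr_eq1 (ltn0Sn (size p))) ?normc_ge0 // -normcX.
  by rewrite (prim_expr_order pw) normc1.
have [u nu z0u] := polar_decomp z0; exists u => //.
pose h := (1 - normc z0)%:C * u.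
have := mean_value_prim_root z0 h pw (leqnSn _).
rewrite big_ord_recl /= expr0 mulr1.
have -> : z0 + h = u by rewrite /h {1}z0u -mulrDl -rmorphD addrC subrK mul1r.
move=> /(congr1 (@normc R)); rewrite normcM normc_nat => <-.
apply: le_trans (le_normcD _ _) (lerD (lexx _) _).
rewrite -[in X in _ <= X](card_ord (size p)) mulr_natl -sumr_const.
apply: le_trans (normc_sum _ _) (ler_sum _ _).
move=> k _; apply: csupnorm_ge; apply: le_trans (le_normcD _ _) _.
rewrite !normcM normcX nw expr1n mulr1 nu mulr1 normc_real ger0_norm; lra.
Qed.

Lemma max_modulus p K : (forall z, normc z = 1 -> normc p.[z] <= K) -> csupnorm p <= K.
Proof.
move=> HK; have N0 : 0 < (size p).+1%:R :> R by rewrite ltr0n.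
suff : csupnorm p <= (K + (size p)%:R * csupnorm p) / (size p).+1%:R.
  by rewrite ler_pdivlMr // mulrSr; lra.
apply: csupnorm_le => z z1; rewrite ler_pdivlMr // mulrC.
by have [u /HK uK] := normc_horner_mean_le p z1; move/le_trans; apply; rewrite lerD.
Qed.

End SupNorm.

Section Lax.
Variable R : realType.
Local Notation C := R[i].
Implicit Types (z w : C) (p : {poly C}).

Lemma normc_deriv_le_circle p z : normc z = 1 ->
    (forall w, normc w < 1 -> p.[w] != 0) ->
  normc p^`().[z] <= normc ((size p).-1%:R * p.[z] - z * p^`().[z]).
Proof.
move=> z1 p_nz; rewrite -[normc p^`().[z]]mul1r -z1 -normcM.
have [pz|pz] := eqVneq p.[z] 0; first by rewrite pz mulr0 sub0r normcN.
apply: normc_mul_deriv_le => // w; rewrite z1 leNgt.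
by apply: contraTN => /p_nz.
Qed.

Lemma normc_deriv_lt_shift p z (l : C) (M : R) : (1 < size p)%N -> normc z = 1 ->
    (forall w, normc w <= 1 -> normc p.[w] <= M) -> 0 < M -> 1 < normc l ->
  normc p^`().[z] < normc ((size p).-1%:R * (p.[z] - l * M%:C) - z * p^`().[z]).
Proof.
move=> p1 z1 pM M0 l1; rewrite -[normc p^`().[z]]mul1r -z1 -normcM.
pose q := p - (l * M%:C)%:P.
have dq : q^`() = p^`() by rewrite derivB derivC subr0.
have sq : size q = size p.
  by rewrite size_polyDl // size_polyN (leq_ltn_trans (size_polyC_leq1 _)).
have q_nz w : normc w <= 1 -> q.[w] != 0.
  move=> w1; rewrite !hornerE subr_eq0; apply: contraTneq (pM w w1) => ->.
  by rewrite -ltNge normcM normc_real gtr0_norm // ltr_pMl.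
have qz : q.[z] = p.[z] - l * M%:C by rewrite !hornerE.
rewrite -qz -sq -dq; apply: normc_mul_deriv_lt; rewrite ?sq ?q_nz ?z1 // => w qw.
by rewrite ltNge; apply: contraTN qw => /q_nz.
Qed.

Lemma lax_csupnorm p (n : nat) : size p = n.+1 ->
    (forall z, normc z < 1 -> p.[z] != 0) ->
  csupnorm p^`() <= n%:R / 2 * csupnorm p.
Proof.
move=> sp p_nz; set M := csupnorm p.
have pM z : normc z <= 1 -> normc p.[z] <= M by apply: csupnorm_ge.
have M0 : 0 < M.
  have p0 : normc p.[0] <= M by apply: pM; rewrite /= expr0n addr0 sqrtr0 ler01.
  apply: lt_le_trans p0; rewrite lt_neqAle normc_ge0 andbT eq_sym normc_eq0.
  by rewrite p_nz //= expr0n addr0 sqrtr0 ltr01.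
case: n sp => [|n] sp.
  have /eqP -> : p^`() == 0.
    by rewrite -size_poly_eq0 -leqn0 -ltnS -sp lt_size_deriv // -size_poly_gt0 sp.
  rewrite !mul0r; apply: csupnorm_le => z _.
  by rewrite horner0 le_eqVlt normc_eq0 eqxx.
apply: max_modulus => z z1.
set A := (n.+1)%:R * p.[z] - z * p^`().[z].
have le_A : normc p^`().[z] <= normc A.
  by have := normc_deriv_le_circle z1 p_nz; rewrite sp.
have : normc p^`().[z] + normc A <= (n.+1)%:R * M.
  have [u nu Au] := polar_decomp A.
  apply: add_le_of_lt_norm_sub; rewrite ?normc_ge0 ?mulr_gt0 ?ltr0n // => t t1.
  have := @normc_deriv_lt_shift p z (t%:C * u) M; rewrite sp => /(_ isT z1 pM M0).
  rewrite normcM nu mulr1 normc_real gtr0_norm ?(lt_trans ltr01) // => /(_ t1).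
  have -> : (n.+1)%:R * (p.[z] - t%:C * u * M%:C) - z * p^`().[z] =
      ((normc A)%:C - ((n.+1)%:R * M * t)%:C) * u.
    by rewrite mulrBl -Au /A !rmorphM rmorph_nat; ring.
  by rewrite normcM nu mulr1 -rmorphB normc_real.
rewrite -natr1; lra.
Qed.

End Lax.

Section PolyFun.
Variable F : numDomainType.

Lemma poly_eq0_of_horner_eq0 (p : {poly F}) : (forall x, p.[x] = 0) -> p = 0.
Proof.
move=> p0; apply: (@roots_geq_poly_eq0 _ p [seq i%:R | i <- iota 0 (size p)]).
- by apply/allP => _ /mapP[i _ ->]; apply/rootP/p0.
- by rewrite map_inj_uniq ?iota_uniq // => i k /eqP; rewrite eqr_nat => /eqP.
- by rewrite size_map size_iota.
Qed.

Lemma coef_eq0_of_sum_eq0 (m : nat) (c : nat -> F) :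
  (forall x, \sum_(0 <= k < m) c k * x ^+ k = 0) -> forall k, (k < m)%N -> c k = 0.
Proof.
move=> H k km; have := coef_poly m c k.
rewrite (@poly_eq0_of_horner_eq0 (\poly_(i < m) c i)) ?coef0 ?km // => x.
by rewrite horner_poly -(big_mkord xpredT (fun i => c i * x ^+ i)).
Qed.

End PolyFun.

Section QuaternionSlices.
Variable R : realType.
Local Notation C := R[i].
Implicit Types q : quat R.

Lemma sphereS_coords (I : quat R) : in_sphereS I ->
  qre I = 0 /\ qi I ^+ 2 + qj I ^+ 2 + qk I ^+ 2 = 1.
Proof.
case: I => a b c d; rewrite /in_sphereS /qmul /qreal /= => -[E0 E1 E2 E3].
have ab : a * b = 0 by lra.
have ac : a * c = 0 by lra.
have ad : a * d = 0 by lra.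
have a0 : a = 0 by nra.
by split=> //; move: E0; rewrite a0; lra.
Qed.

Lemma qnorm_ge0 q : 0 <= qnorm q.
Proof. exact: sqrtr_ge0. Qed.

Lemma qnorm_eq0 q : qnorm q = 0 -> q = qzero R.
Proof.
case: q => a b c d /eqP; rewrite sqrtr_eq0 /qzero /qreal /= => h.
have := sqr_ge0 a; have := sqr_ge0 b; have := sqr_ge0 c; have := sqr_ge0 d.
by move=> *; congr Quat; nra.
Qed.

Lemma sliceC_Quat (I1 I2 I3 x y : R) :
  sliceC (Quat 0 I1 I2 I3) x y = Quat x (I1 * y) (I2 * y) (I3 * y).
Proof. by rewrite /sliceC /qadd /qmul /qreal /=; congr Quat; ring. Qed.

Lemma qsum_ext m (F G : nat -> quat R) :
  (forall j, (j < m)%N -> F j = G j) -> qsum m F = qsum m G.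
Proof.
rewrite /qsum => FG; have : {in iota 0 m, F =1 G} by move=> j; rewrite mem_iota => /FG.
elim: (iota 0 m) => //= j r IH FGr; rewrite FGr ?mem_head // IH // => k kr.
by rewrite FGr // in_cons kr orbT.
Qed.

Lemma qsum_Quat m (F : nat -> quat R) : qsum m F =
  Quat (\sum_(0 <= j < m) qre (F j)) (\sum_(0 <= j < m) qi (F j))
       (\sum_(0 <= j < m) qj (F j)) (\sum_(0 <= j < m) qk (F j)).
Proof.
rewrite /index_iota subn0 /qsum.
by elim: (iota 0 m) => [|j r IH]; rewrite ?big_nil // !big_cons /= IH.
Qed.

Lemma qpow_qreal (x : R) j : qpow (qreal x) j = qreal (x ^+ j).
Proof.
by elim: j => [|j IH] //=; rewrite IH /qmul /qreal /=; congr Quat; rewrite ?exprSr; ring.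
Qed.

Lemma sliceC_of_cross0 (I1 I2 I3 : R) q : I1 ^+ 2 + I2 ^+ 2 + I3 ^+ 2 = 1 ->
    qi q * I2 - qj q * I1 = 0 -> qj q * I3 - qk q * I2 = 0 -> qi q * I3 - qk q * I1 = 0 ->
  q = sliceC (Quat 0 I1 I2 I3) (qre q) (qi q * I1 + qj q * I2 + qk q * I3).
Proof.
case: q => a b c d /= HI h1 h2 h3; rewrite sliceC_Quat.
congr Quat; apply/eqP; rewrite -subr_eq0 -[X in X - _]mulr1 -HI; apply/eqP.
- transitivity (I2 * (b * I2 - c * I1) + I3 * (b * I3 - d * I1)); first ring.
  by rewrite h1 h3; ring.
- transitivity (I3 * (c * I3 - d * I2) - I1 * (b * I2 - c * I1)); first ring.
  by rewrite h1 h2; ring.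
- transitivity (- I1 * (b * I3 - d * I1) - I2 * (c * I3 - d * I2)); first ring.
  by rewrite h2 h3; ring.
Qed.

Lemma spoly_coef_in_slice (n : nat) (a : nat -> quat R) (I1 I2 I3 : R) :
    I1 ^+ 2 + I2 ^+ 2 + I3 ^+ 2 = 1 ->
    (forall x : R, exists u v : R, spoly n a (qreal x) = sliceC (Quat 0 I1 I2 I3) u v) ->
  forall j, (j <= n)%N -> a j = sliceC (Quat 0 I1 I2 I3)
    (qre (a j)) (qi (a j) * I1 + qj (a j) * I2 + qk (a j) * I3).
Proof.
move=> HI HP j jn.
have coords x : exists v, [/\ \sum_(0 <= k < n.+1) qi (a k) * x ^+ k = I1 * v,
    \sum_(0 <= k < n.+1) qj (a k) * x ^+ k = I2 * v &
    \sum_(0 <= k < n.+1) qk (a k) * x ^+ k = I3 * v].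
  have [u [v E]] := HP x; exists v.
  move: E; rewrite /spoly qsum_Quat sliceC_Quat => -[_ <- <- <-].
  by split; apply: eq_bigr => k _; rewrite qpow_qreal /=; ring.
have cross0 (f g : quat R -> R) (c1 c2 : R) : (forall x, exists v,
      \sum_(0 <= k < n.+1) f (a k) * x ^+ k = c2 * v /\
      \sum_(0 <= k < n.+1) g (a k) * x ^+ k = c1 * v) ->
    f (a j) * c1 - g (a j) * c2 = 0.
  move=> fg; apply: (coef_eq0_of_sum_eq0 (m := n.+1)
    (c := fun k => f (a k) * c1 - g (a k) * c2)) => // x.
  rewrite (eq_bigr (fun k => c1 * (f (a k) * x ^+ k) - c2 * (g (a k) * x ^+ k))).
    by rewrite sumrB -mulr_sumr -mulr_sumr; have [v [-> ->]] := fg x; ring.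
  by move=> k _; ring.
have [h1 h2 h3] : [/\ qi (a j) * I2 - qj (a j) * I1 = 0,
    qj (a j) * I3 - qk (a j) * I2 = 0 & qi (a j) * I3 - qk (a j) * I1 = 0].
  by split; apply: cross0 => x; have [v [? ? ?]] := coords x; exists v.
by apply: sliceC_of_cross0.
Qed.

(* [(x + y J)^j = a + y b J] with [(a, b) = pow_parts x (y^2) j] whenever [J^2 = -1]. *)
Fixpoint pow_parts (x y2 : R) (j : nat) : R * R :=
  if j is j'.+1 then ((pow_parts x y2 j').1 * x - y2 * (pow_parts x y2 j').2,
                     (pow_parts x y2 j').1 + (pow_parts x y2 j').2 * x)
  else (1, 0).

Lemma qpow_parts (x q1 q2 q3 : R) j :
  let y2 := q1 ^+ 2 + q2 ^+ 2 + q3 ^+ 2 in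
  qpow (Quat x q1 q2 q3) j = Quat (pow_parts x y2 j).1
    (q1 * (pow_parts x y2 j).2) (q2 * (pow_parts x y2 j).2) (q3 * (pow_parts x y2 j).2).
Proof.
elim: j => [|j IH] /=; first by rewrite /qone /qreal !mulr0.
by rewrite IH /qmul /=; congr Quat; ring.
Qed.

Lemma exprC_parts (x y y2 : R) j : y ^+ 2 = y2 ->
  (x +i* y) ^+ j = (pow_parts x y2 j).1 +i* (y * (pow_parts x y2 j).2).
Proof.
move=> y2E; elim: j => [|j IH] /=; first by rewrite expr0 mulr0.
by rewrite exprSr IH -y2E; congr Complex; ring.
Qed.

Definition slice_poly (I : quat R) (m : nat) (u v : nat -> R) (q : quat R) : quat R :=
  qsum m (fun j => qmul (qpow q j) (sliceC I (u j) (v j))).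

Definition cpoly (m : nat) (u v : nat -> R) : {poly C} := \poly_(j < m) (u j +i* v j).

Definition pow_parts_sum1 (x y2 : R) (u : nat -> R) (m : nat) : R :=
  \sum_(j < m) (pow_parts x y2 j).1 * u j.
Definition pow_parts_sum2 (x y2 : R) (u : nat -> R) (m : nat) : R :=
  \sum_(j < m) (pow_parts x y2 j).2 * u j.

(* [A + I B + q (C + I D)] for the pure quaternions [I = (I1, I2, I3)] and [q = (q1, q2, q3)] *)
Definition quat_of_parts (I1 I2 I3 q1 q2 q3 A B C D : R) : quat R :=
  Quat (A - (q1 * I1 + q2 * I2 + q3 * I3) * D)
       (I1 * B + q1 * C + (q2 * I3 - q3 * I2) * D)
       (I2 * B + q2 * C + (q3 * I1 - q1 * I3) * D)
       (I3 * B + q3 * C + (q1 * I2 - q2 * I1) * D).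

Lemma slice_poly_parts (I1 I2 I3 x q1 q2 q3 : R) (u v : nat -> R) m :
  let y2 := q1 ^+ 2 + q2 ^+ 2 + q3 ^+ 2 in
  slice_poly (Quat 0 I1 I2 I3) m u v (Quat x q1 q2 q3) =
  quat_of_parts I1 I2 I3 q1 q2 q3 (pow_parts_sum1 x y2 u m) (pow_parts_sum1 x y2 v m)
    (pow_parts_sum2 x y2 u m) (pow_parts_sum2 x y2 v m).
Proof.
rewrite /pow_parts_sum1 /pow_parts_sum2.
rewrite -!(big_mkord xpredT (fun j => (pow_parts _ _ j).1 * _ j)).
rewrite -!(big_mkord xpredT (fun j => (pow_parts _ _ j).2 * _ j)).
rewrite /index_iota subn0 /slice_poly /qsum.
elim: (iota 0 m) => [|j r IH] /=.
  by rewrite !big_nil /quat_of_parts /qzero /qreal; congr Quat; ring.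
rewrite IH !big_cons qpow_parts /sliceC /qadd /qmul /qreal /quat_of_parts /=.
by congr Quat; ring.
Qed.

Lemma qnorm_quat_of_parts_sqr (I1 I2 I3 q1 q2 q3 A B C D : R) :
    I1 ^+ 2 + I2 ^+ 2 + I3 ^+ 2 = 1 ->
  qnorm (quat_of_parts I1 I2 I3 q1 q2 q3 A B C D) ^+ 2 =
  A ^+ 2 + B ^+ 2 + (q1 ^+ 2 + q2 ^+ 2 + q3 ^+ 2) * (C ^+ 2 + D ^+ 2)
  + 2 * (q1 * I1 + q2 * I2 + q3 * I3) * (B * C - A * D).
Proof.
move=> HI; rewrite /qnorm sqr_sqrtr; last by rewrite !addr_ge0 ?sqr_ge0.
have sq1 (r : R) : r ^+ 2 = r ^+ 2 * (I1 ^+ 2 + I2 ^+ 2 + I3 ^+ 2) by rewrite HI mulr1.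
by rewrite [B ^+ 2]sq1 [D ^+ 2]sq1 /quat_of_parts /=; ring.
Qed.

Lemma mulcE (a b c d : R) :
  (a +i* b) * (c +i* d) = (a * c - b * d) +i* (a * d + b * c) :> C.
Proof. by []. Qed.

Lemma sum_complex (T : Type) (r : seq T) (a b : T -> R) :
  \sum_(i <- r) (a i +i* b i) = (\sum_(i <- r) a i) +i* (\sum_(i <- r) b i).
Proof. by elim: r => [|x r IH]; rewrite ?big_nil // !big_cons IH. Qed.

Lemma normc_cpoly_sqr m (u v : nat -> R) (x y y2 : R) : y ^+ 2 = y2 ->
  normc (cpoly m u v).[x +i* y] ^+ 2 =
  pow_parts_sum1 x y2 u m ^+ 2 + pow_parts_sum1 x y2 v m ^+ 2
  + y2 * (pow_parts_sum2 x y2 u m ^+ 2 + pow_parts_sum2 x y2 v m ^+ 2)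
  + 2 * y * (pow_parts_sum1 x y2 v m * pow_parts_sum2 x y2 u m
             - pow_parts_sum1 x y2 u m * pow_parts_sum2 x y2 v m).
Proof.
move=> y2E; rewrite /cpoly horner_poly.
under eq_bigr do rewrite (exprC_parts _ _ y2E) mulcE.
rewrite sum_complex normc_sqr /pow_parts_sum1 /pow_parts_sum2.
have -> : \sum_(i < m) (u i * (pow_parts x y2 i).1 - v i * (y * (pow_parts x y2 i).2)) =
    \sum_(i < m) (pow_parts x y2 i).1 * u i - y * \sum_(i < m) (pow_parts x y2 i).2 * v i.
  by rewrite mulr_sumr -sumrB; apply: eq_bigr => i _; ring.
have -> : \sum_(i < m) (u i * (y * (pow_parts x y2 i).2) + v i * (pow_parts x y2 i).1) =
    \sum_(i < m) (pow_parts x y2 i).1 * v i + y * \sum_(i < m) (pow_parts x y2 i).2 * u i.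
  by rewrite mulr_sumr -big_split; apply: eq_bigr => i _ /=; ring.
by rewrite -y2E; ring.
Qed.

Section SliceNorm.
Variables (I1 I2 I3 : R) (m : nat) (u v : nat -> R).
Hypothesis HI : I1 ^+ 2 + I2 ^+ 2 + I3 ^+ 2 = 1.
Local Notation I := (Quat 0 I1 I2 I3).
Local Notation P := (slice_poly I m u v).
Local Notation p := (cpoly m u v).

(* Writing [q = x + q'] with [q'] pure, [P q] only involves [x], [|q'|] and [q'.I]; and
   [|q'.I| <= |q'|] by Cauchy-Schwarz, so one of [x +- |q'| i] does at least as well. *)
Lemma qnorm_slice_poly_le q :
  exists2 z, normc z = qnorm q & qnorm (P q) <= normc p.[z].
Proof.
case: q => x q1 q2 q3; rewrite slice_poly_parts /=.
set y2 := _ + _ + _; set d := q1 * I1 + q2 * I2 + q3 * I3.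
have y20 : 0 <= y2 by rewrite !addr_ge0 ?sqr_ge0.
have d2 : d ^+ 2 <= y2.
  have -> : y2 = d ^+ 2 + ((q2 * I3 - q3 * I2) ^+ 2 + (q3 * I1 - q1 * I3) ^+ 2
      + (q1 * I2 - q2 * I1) ^+ 2).
    by rewrite -[y2]mulr1 -HI /y2 /d; ring.
  by rewrite lerDl !addr_ge0 ?sqr_ge0.
set A := pow_parts_sum1 x y2 u m; set B := pow_parts_sum1 x y2 v m.
set C' := pow_parts_sum2 x y2 u m; set D := pow_parts_sum2 x y2 v m.
pose Y := if 0 <= B * C' - A * D then Num.sqrt y2 else - Num.sqrt y2.
have Y2 : Y ^+ 2 = y2 by rewrite /Y; case: ifP; rewrite ?sqrrN sqr_sqrtr.
have dY : d * (B * C' - A * D) <= Y * (B * C' - A * D).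
  have /ler_normlP[dl du] : `|d| <= Num.sqrt y2 by rewrite -sqrtr_sqr ler_sqrt.
  rewrite /Y; case: ifP => [G0|/negbT]; first by rewrite ler_wpM2r.
  by rewrite -ltNge => G0; rewrite ler_wnM2r ?(ltW G0) // lerNl.
exists (x +i* Y); first by rewrite /qnorm /= Y2 /y2; congr Num.sqrt; ring.
rewrite -ler_sqr ?nnegrE ?qnorm_ge0 ?normc_ge0 //.
rewrite (normc_cpoly_sqr _ _ _ _ Y2) qnorm_quat_of_parts_sqr //.
by rewrite -/y2 -/d -/A -/B -/C' -/D; lra.
Qed.

Lemma qnorm_sliceC (x y : R) : qnorm (sliceC I x y) = normc (x +i* y).
Proof.
by rewrite sliceC_Quat /qnorm /=; congr Num.sqrt; rewrite -[y ^+ 2]mulr1 -HI; ring.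
Qed.

Lemma qnorm_slice_poly_sliceC (x y : R) :
  qnorm (P (sliceC I x y)) = normc p.[x +i* y].
Proof.
have y2E : (I1 * y) ^+ 2 + (I2 * y) ^+ 2 + (I3 * y) ^+ 2 = y ^+ 2.
  by rewrite !exprMn -!mulrDl HI mul1r.
have dE : I1 * y * I1 + I2 * y * I2 + I3 * y * I3 = y.
  by rewrite -[y in RHS]mul1r -HI; ring.
rewrite sliceC_Quat slice_poly_parts /= y2E; apply/eqP.
rewrite -(eqrXn2 (ltn0Sn 1)) ?qnorm_ge0 ?normc_ge0 //.
by rewrite (normc_cpoly_sqr _ _ _ _ (erefl (y ^+ 2))) qnorm_quat_of_parts_sqr // dE y2E.
Qed.

Lemma qsupnorm_slice_poly : qsupnorm P = csupnorm p.
Proof.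
have P_le q : qnorm q <= 1 -> qnorm (P q) <= csupnorm p.
  move=> q1; have [z zq /le_trans] := qnorm_slice_poly_le q; apply.
  by apply: csupnorm_ge; rewrite zq.
have q01 : qnorm (qzero R) <= 1 by rewrite /qnorm /= expr0n !addr0 sqrtr0 ler01.
apply/le_anti/andP; split.
  apply: ge_sup => [|_ [q /= q1 <-]]; last exact: P_le.
  by exists (qnorm (P (qzero R))), (qzero R).
apply: csupnorm_le => -[x y] z1; rewrite -qnorm_slice_poly_sliceC.
apply: sup_upper_bound; last by exists (sliceC I x y); rewrite //= qnorm_sliceC.
split; first by exists (qnorm (P (qzero R))), (qzero R).
by exists (csupnorm p) => _ [q /= q1 <-]; apply: P_le.
Qed.

End SliceNorm.

Lemma deriv_cpoly m (u v : nat -> R) : (cpoly m.+1 u v)^`() =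
  cpoly m (fun j => j.+1%:R * u j.+1) (fun j => j.+1%:R * v j.+1).
Proof.
apply/polyP => j; rewrite coef_deriv !coef_poly ltnS.
case: ifP => _; last by rewrite mul0rn.
have natmulC (a b : R) k : (a +i* b) *+ k = (a *+ k) +i* (b *+ k).
  by elim: k => [|k IH]; rewrite ?mulrS ?IH.
by rewrite natmulC !mulr_natl.
Qed.

Lemma qmul_qreal_sliceC (r I1 I2 I3 x y : R) :
  qmul (qreal r) (sliceC (Quat 0 I1 I2 I3) x y) =
  sliceC (Quat 0 I1 I2 I3) (r * x) (r * y).
Proof. by rewrite !sliceC_Quat /qmul /=; congr Quat; ring. Qed.

End QuaternionSlices.

Theorem proposition2p2 (R : realType) (n : nat) (a : nat -> quat R)
  (I : quat R) :
  a n <> qzero R ->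
  in_sphereS I ->
  (forall x y : R, x ^+ 2 + y ^+ 2 < 1 -> spoly n a (sliceC I x y) <> qzero R) ->
  (forall x y : R, exists u v : R, spoly n a (sliceC I x y) = sliceC I u v) ->
  qsupnorm (spoly_deriv n a) <= n%:R / 2 * qsupnorm (spoly n a).
Proof.
move=> an0 HS P_nz P_slice; have [I0 HI] := sphereS_coords HS.
move: I I0 HI P_nz P_slice {HS} => [i0 I1 I2 I3] /= -> HI P_nz P_slice.
pose u j := qre (a j); pose v j := qi (a j) * I1 + qj (a j) * I2 + qk (a j) * I3.
have a_slice j : (j <= n)%N -> a j = sliceC (Quat 0 I1 I2 I3) (u j) (v j).
  apply: spoly_coef_in_slice => // x.
  by have := P_slice x 0; rewrite sliceC_Quat !mulr0.
have EP : spoly n a = slice_poly (Quat 0 I1 I2 I3) n.+1 u v.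
  by apply/funext => q; apply: qsum_ext => j jn; rewrite a_slice.
have -> : spoly_deriv n a = slice_poly (Quat 0 I1 I2 I3) n
    (fun j => j.+1%:R * u j.+1) (fun j => j.+1%:R * v j.+1).
  by apply/funext => q; apply: qsum_ext => j jn; rewrite a_slice // qmul_qreal_sliceC.
rewrite EP !qsupnorm_slice_poly // -deriv_cpoly; apply: lax_csupnorm.
  rewrite size_poly_eq //=; apply: contra_not_neq an0.
  rewrite a_slice // => /eqP; rewrite eq_complex /= => /andP[/eqP -> /eqP ->].
  by rewrite sliceC_Quat !mulr0.
move=> [x y] z1; apply/eqP => p0; apply: (P_nz x y).
  by rewrite -normc_sqr exprn_ilt1 ?normc_ge0.
by apply: qnorm_eq0; rewrite EP qnorm_slice_poly_sliceC // p0 normc0.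
Qed.
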